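(* Let $G$ be a graph of order $n$ with adjacency eigenvalues $\lambda_1(G)\ge\cdots\ge\lambda_n(G)$, let $F$ be a clique partition of $G$, and let $t_1^F$ be the largest clique-degree of $G$ with respect to $F$. Then $$\lambda_n(G)\ge -t_1^F.$$ Moreover, if equality holds then $\mathrm{rank}(\mathcal M_F)<n$; and if $\mathrm{rank}(\mathcal M_F)<n$ and $G$ is clique-regular with respect to $F$, then equality holds.
   Context: All graphs are finite and simple. A clique of $G$ is a set of pairwise adjacent vertices. A clique partition of $G$ is a set $F=\{C_1,\dots,C_k\}$ of cliques of $G$ such that every edge of $G$ lies in exactly one $C_j$. For $V(G)=\{1,\dots,n\}$, the vertex-clique incidence matrix $\mathcal M_F$ is the $n\times k$ $(0,1)$-matrix whose $(i,j)$-entry is $1$ iff vertex $i\in C_j$. The clique-degree of vertex $i$ is $t_i^F=|\{j: i\in C_j\}|$; $t_1^F$ denotes the largest clique-degree. $G$ is clique-regular (with respect to $F$) if all $t_i^F$ are equal. Eigenvalues of $G$ are those of its adjacency matrix. *)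

From mathcomp Require Import all_boot all_order all_algebra.
Set Implicit Arguments. Unset Strict Implicit. Unset Printing Implicit Defensive.
Import Order.TTheory GRing.Theory Num.Theory.
Local Open Scope ring_scope.

Definition simple_graph (n : nat) (e : rel 'I_n) : Prop :=
  (forall x, ~~ e x x) /\ (forall x y, e x y = e y x).

Definition is_clique (n : nat) (e : rel 'I_n) (C : {set 'I_n}) : Prop :=
  forall x y, x \in C -> y \in C -> x != y -> e x y.

Definition clique_partition (n : nat) (e : rel 'I_n) (F : {set {set 'I_n}}) : Prop :=
  (forall C, C \in F -> is_clique e C) /\
  (forall x y, e x y -> #|[set C in F | (x \in C) && (y \in C)]| = 1%N).

Definition clique_degree (n : nat) (F : {set {set 'I_n}}) (i : 'I_n) : nat :=
  #|[set C in F | i \in C]|.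

Definition max_clique_degree (n : nat) (F : {set {set 'I_n}}) : nat :=
  \max_(i < n) clique_degree F i.

Definition clique_regular (n : nat) (F : {set {set 'I_n}}) : Prop :=
  forall i j : 'I_n, clique_degree F i = clique_degree F j.

Definition adj_mx (R : nzRingType) (n : nat) (e : rel 'I_n) : 'M[R]_n :=
  \matrix_(i, j) (e i j)%:R.

Definition incidence_mx (R : nzRingType) (n : nat) (F : {set {set 'I_n}})
  : 'M[R]_(n, #|F|) :=
  \matrix_(i < n, j < #|F|) (i \in enum_val j)%:R.

(* l is the least eigenvalue lambda_n of the real square matrix A
   (for a real symmetric matrix over a real closed field, all eigenvalues lie in R). *)
Definition least_eigenvalue (R : realFieldType) (n : nat) (A : 'M[R]_n) (l : R) : Prop :=
  eigenvalue A l /\ (forall a : R, eigenvalue A a -> l <= a).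

From mathcomp Require Import all_boot all_order all_algebra.
Set Implicit Arguments. Unset Strict Implicit. Unset Printing Implicit Defensive.
Import Order.TTheory GRing.Theory Num.Theory.
Local Open Scope ring_scope.

(* Writing M for the incidence matrix of F and t_i for the clique-degrees,
   A + t I = M M^T + diag(t - t_i) for every scalar t, because (M M^T)_ij
   counts the cliques of F containing both i and j: t_i on the diagonal, and
   off it 1 or 0 according as ij is an edge.  For t = t_1 the right-hand side
   is a Gram matrix plus a nonnegative diagonal, hence positive semidefinite,
   so every eigenvalue of A is at least -t_1, and any eigenvector for -t_1 is
   killed by M^T, forcing rank M < n.  Under clique-regularity the diagonal
   term vanishes, and a nonzero vector in the left kernel of M is then an
   eigenvector of A for -t_1. *)

Lemma rank_lt_rowsP (K : fieldType) m k (M : 'M[K]_(m, k)) :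
  reflect (exists2 v : 'rV_m, v *m M = 0 & v != 0) (\rank M < m)%N.
Proof.
rewrite ltn_neqAle rank_leq_row andbT -[_ != _]/(~~ row_free M) -kermx_eq0.
by apply: (iffP rowV0Pn) => -[v vM v_neq0]; exists v => //; apply/sub_kermxP.
Qed.

Lemma eigenvalue_add_scalar (K : fieldType) n (A : 'M[K]_n) (a t : K) :
  eigenvalue (A + t%:M) (a + t) = eigenvalue A a.
Proof.
by rewrite /eigenvalue /eigenspace raddfD opprD addrACA subrr addr0.
Qed.

Section GramPlusDiagonal.
Variable R : realFieldType.

Lemma dotmx_self_ge0 p (w : 'rV[R]_p) : 0 <= (w *m w^T) 0 0.
Proof. by rewrite !mxE; apply: sumr_ge0 => j _; rewrite mxE -expr2 sqr_ge0. Qed.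

Lemma dotmx_self_eq0 p (w : 'rV[R]_p) : ((w *m w^T) 0 0 == 0) = (w == 0).
Proof.
apply/idP/eqP => [|->]; last by rewrite mul0mx mxE.
rewrite mxE psumr_eq0 => [/allP w0|j _]; last by rewrite mxE -expr2 sqr_ge0.
apply/rowP => j; have := w0 j (mem_index_enum j).
by rewrite /= mxE mxE mulf_eq0 orbb => /eqP.
Qed.

Variables (m k : nat) (B : 'M[R]_(m, k)) (d : 'rV[R]_m).
Hypothesis d_ge0 : forall i, 0 <= d 0 i.

Let S := B *m B^T + diag_mx d.

Lemma diag_form_ge0 (w : 'rV[R]_m) : 0 <= (w *m diag_mx d *m w^T) 0 0.
Proof.
rewrite mul_mx_diag !mxE; apply: sumr_ge0 => j _; rewrite !mxE.
by rewrite mulrAC mulr_ge0 // -expr2 sqr_ge0.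
Qed.

Lemma gram_diag_form (v : 'rV[R]_m) :
  (v *m S *m v^T) 0 0 =
  ((v *m B) *m (v *m B)^T) 0 0 + (v *m diag_mx d *m v^T) 0 0.
Proof. by rewrite mulmxDr mulmxDl !mulmxA trmx_mul mulmxA mxE. Qed.

Lemma gram_diag_eigenvalue_ge0 a : eigenvalue S a -> 0 <= a.
Proof.
case/eigenvalueP => v vS v_neq0.
have v_pos : 0 < (v *m v^T) 0 0.
  by rewrite lt_def dotmx_self_eq0 v_neq0 dotmx_self_ge0.
rewrite -(pmulr_lge0 _ v_pos).
have <- : (v *m S *m v^T) 0 0 = a * (v *m v^T) 0 0 by rewrite vS -scalemxAl mxE.
by rewrite gram_diag_form addr_ge0 ?dotmx_self_ge0 ?diag_form_ge0.
Qed.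

Lemma gram_diag_kernel (v : 'rV[R]_m) : v *m S = 0 -> v *m B = 0.
Proof.
move=> vS; apply/eqP; rewrite -dotmx_self_eq0 eq_le dotmx_self_ge0 andbT.
rewrite -(lerD2r ((v *m diag_mx d *m v^T) 0 0)) -gram_diag_form vS mul0mx mxE.
by rewrite add0r diag_form_ge0.
Qed.

End GramPlusDiagonal.

Section CliquePartition.
Variables (R : nzRingType) (n : nat) (e : rel 'I_n) (F : {set {set 'I_n}}).
Hypotheses (e_simple : simple_graph e) (F_partition : clique_partition e F).

Lemma incidence_gram i j :
  (incidence_mx R F *m (incidence_mx R F)^T) i j =
  #|[set C in F | (i \in C) && (j \in C)]|%:R.
Proof.
transitivity (\sum_(C in F) ((i \in C) && (j \in C))%:R : R).
  rewrite mxE [RHS]big_enum_val; apply: eq_bigr => c _.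
  by rewrite !mxE -natrM mulnb.
rewrite -natr_sum -sum1_card big_mkcond [in RHS]big_mkcond /=; congr _%:R.
by apply: eq_bigr => C _; rewrite inE; case: (C \in F).
Qed.

Lemma adj_mx_add_scalar (t : R) :
  adj_mx R e + t%:M =
  incidence_mx R F *m (incidence_mx R F)^T
    + diag_mx (\row_i (t - (clique_degree F i)%:R)).
Proof.
have [e_irr _] := e_simple; have [F_cliques F_edge] := F_partition.
apply/matrixP => i j; rewrite [in RHS]mxE incidence_gram !mxE.
have [<-|ij] := eqVneq i j.
  rewrite (negbTE (e_irr i)) !mulr1n add0r /clique_degree.
  by under eq_finset do rewrite andbb; rewrite addrC subrK.
rewrite !mulr0n !addr0; case eij: (e i j); first by rewrite F_edge.
suff -> : [set C in F | (i \in C) && (j \in C)] = set0 by rewrite cards0.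
apply/setP => C; rewrite !inE; apply/negbTE/and3P => -[CF iC jC].
by move: (F_cliques C CF i j iC jC ij); rewrite eij.
Qed.

End CliquePartition.

Lemma clique_degree_le_max n (F : {set {set 'I_n}}) i :
  (clique_degree F i <= max_clique_degree F)%N.
Proof. exact: (leq_bigmax (F := clique_degree F)). Qed.

Lemma max_clique_degree_regular n (F : {set {set 'I_n}}) i :
  clique_regular F -> max_clique_degree F = clique_degree F i.
Proof.
move=> F_reg; apply/eqP; rewrite eqn_leq clique_degree_le_max andbT.
by apply/bigmax_leqP => j _; rewrite (F_reg j i).
Qed.

Theorem mainTheorem1 (R : rcfType) (n : nat) (e : rel 'I_n) (F : {set {set 'I_n}}) :
  simple_graph e -> clique_partition e F ->
  let A : 'M[R]_n := adj_mx R e in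
  let t1 : R := (max_clique_degree F)%:R in
  (* lambda_n(G) >= -t1 : every eigenvalue of A is at least -t1 *)
  (forall a : R, eigenvalue A a -> - t1 <= a) /\
  (* equality lambda_n = -t1 implies rank M_F < n *)
  (least_eigenvalue A (- t1) -> (\rank (incidence_mx R F) < n)%N) /\
  (* rank M_F < n and clique-regularity imply equality *)
  ((\rank (incidence_mx R F) < n)%N -> clique_regular F -> least_eigenvalue A (- t1)).
Proof.
move=> e_simple F_partition A t1.
set M := incidence_mx R F; set d := \row_i (t1 - (clique_degree F i)%:R).
have d_ge0 i : 0 <= d 0 i by rewrite mxE subr_ge0 ler_nat clique_degree_le_max.
have shiftA : A + t1%:M = M *m M^T + diag_mx d.
  exact: adj_mx_add_scalar.
have ge_t1 a : eigenvalue A a -> - t1 <= a.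
  rewrite -(eigenvalue_add_scalar _ _ t1) shiftA.
  by move=> /(gram_diag_eigenvalue_ge0 d_ge0); rewrite -[_ <= a]subr_ge0 opprK.
split=> //; split=> [[/eigenvalueP [v vA v_neq0] _]|/rank_lt_rowsP [v vM v_neq0] F_reg].
  apply/rank_lt_rowsP; exists v => //; apply: (gram_diag_kernel d_ge0).
  by rewrite -shiftA mulmxDr vA mul_mx_scalar scaleNr addNr.
have d0 : d = 0.
  by apply/rowP => i; rewrite !mxE /t1 (max_clique_degree_regular i F_reg) subrr.
split=> //; apply/eigenvalueP; exists v => //; apply/eqP.
rewrite scaleNr -addr_eq0 -mul_mx_scalar -mulmxDr shiftA d0 raddf0 addr0.
by rewrite mulmxA vM mul0mx.
Qed.
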